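(* Let $q(\mathbf{y},\mathbf{x})$ be a joint distribution of a label $\mathbf{y}$ and inputs $\mathbf{x}\in\mathbb{R}^d$, and $e:\mathbb{R}^d\to\{0,1\}^d$ an explanation. Then $e$ is encoding if and only if there exist a selection $\mathbf{v}$ with $q(e(\mathbf{x})=\mathbf{v})>0$ and a set $\mathbf{S}_{\mathbf{v}}\subseteq\{\mathbf{x}_{\mathbf{v}}: e(\mathbf{x})=\mathbf{v}\}$ with $q(\mathbf{x}_{\mathbf{v}}\in\mathbf{S}_{\mathbf{v}})>0$ such that for all $\mathbf{a}\in\mathbf{S}_{\mathbf{v}}$, $\mathbf{y}$ is not conditionally independent of $\mathbf{E}_{\mathbf{v}}$ given $\mathbf{x}_{\mathbf{v}}=\mathbf{a}$.
   Context: For $\mathbf{v}\in\{0,1\}^d$, $\mathbf{x}_{\mathbf{v}}$ denotes the values of the coordinates selected by $\mathbf{v}$; the explanation is the random pair $\mathbf{x}_{e(\mathbf{x})}=(e(\mathbf{x}),\mathbf{x}_{e(\mathbf{x})})$, written $(\mathbf{v},\mathbf{a})$; $\mathbf{E}_{\mathbf{v}}=\mathbb{1}[e(\mathbf{x})=\mathbf{v}]$. Regular conditional distributions are assumed to exist. $e$ is encoding if there is a set $\mathbf{S}$ of pairs with $q(\mathbf{x}_{e(\mathbf{x})}\in\mathbf{S})>0$ such that for every $(\mathbf{v},\mathbf{a})\in\mathbf{S}$, $\mathbf{y}$ is not conditionally independent of $\mathbf{E}_{\mathbf{v}}$ given $\mathbf{x}_{\mathbf{v}}=\mathbf{a}$.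 *)

From HB Require Import structures.
From mathcomp Require Import all_boot all_order all_algebra.
From mathcomp Require Import all_classical all_reals all_analysis.
Set Implicit Arguments.
Unset Strict Implicit.
Unset Printing Implicit Defensive.
Import Order.TTheory GRing.Theory Num.Theory.
Local Open Scope classical_set_scope.
Local Open Scope ring_scope.

Section explanations.
Context {R : realType} {dY : measure_display} {Y : measurableType dY} {d : nat}.

(* x_v : the coordinates of x selected by v.  Encoded as a d-tuple whose
   unselected coordinates are set to 0; together with v this determines
   (and is determined by) the selected values. *)
Definition sel (v : d.-tuple bool) (x : d.-tuple R) : d.-tuple R :=
  [tuple if tnth v i then tnth x i else 0 | i < d].

Definition Eind (e : d.-tuple R -> d.-tuple bool) (v : d.-tuple bool)
  (x : d.-tuple R) : bool := e x == v.

Definition is_rcd (q : probability (Y * d.-tuple R)%type R)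
  (e : d.-tuple R -> d.-tuple bool)
  (kappa : d.-tuple bool -> R.-pker (d.-tuple R) ~> (Y * bool)%type) : Prop :=
  forall (v : d.-tuple bool) (A : set (d.-tuple R)) (B : set (Y * bool)%type),
    measurable A -> measurable B ->
    q [set w | A (sel v w.2) /\ B (w.1, Eind e v w.2)] =
    (\int[q]_(w in [set w | A (sel v w.2)]) kappa v (sel v w.2) B)%E.

Definition cond_indep_at
  (kappa : d.-tuple bool -> R.-pker (d.-tuple R) ~> (Y * bool)%type)
  (v : d.-tuple bool) (a : d.-tuple R) : Prop :=
  forall (A : set Y) (B : set bool), measurable A -> measurable B ->
    kappa v a (A `*` B) = (kappa v a (A `*` setT) * kappa v a (setT `*` B))%E.

Definition encoding (q : probability (Y * d.-tuple R)%type R)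
  (e : d.-tuple R -> d.-tuple bool)
  (kappa : d.-tuple bool -> R.-pker (d.-tuple R) ~> (Y * bool)%type) : Prop :=
  exists S : set (d.-tuple bool * d.-tuple R)%type,
    [/\ measurable S,
        (0 < q [set w | S (e w.2, sel (e w.2) w.2)])%E &
        forall v a, S (v, a) -> ~ cond_indep_at kappa v a].

End explanations.

From HB Require Import structures.
From mathcomp Require Import all_boot all_order all_algebra.
From mathcomp Require Import all_classical all_reals all_analysis.
From mathcomp Require Import measurable_realfun.
Import Order.TTheory GRing.Theory Num.Theory.
Import numFieldNormedType.Exports.
Local Open Scope classical_set_scope.
Local Open Scope ring_scope.

(* If [e] is encoding, the set of inputs whose explanation lands in [S] has
   positive mass, so since there are finitely many selections, some [v] gives
   positive mass to [G = {x | e x = v, (v, x_v) \in S}].  The set [S_v] must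
   live inside the image of [G] under [x |-> x_v], which need not be Borel; but
   finite Borel measures on [R^d] are inner regular, so [G] contains a compact
   set of positive mass, and its image is compact, hence Borel.
   Conversely, by the defining property of the regular conditional
   distribution, the mass of [{e x = v, x_v \in S_v}] is the integral over
   [{x_v \in S_v}] of the conditional probability of [E_v = 1].  If it
   vanished, this probability would be [0] at some [a \in S_v], and then [y]
   and [E_v] are trivially independent given [x_v = a]. *)

Lemma measurable_coordinatewise {d} {T : measurableType d} {n} (P : 'I_n -> set T) :
  (forall i, measurable (P i)) ->
  measurable [set x : n.-tuple T | forall i, P i (tnth x i)].
Proof.
move=> mP.
have -> : [set x : n.-tuple T | forall i, P i (tnth x i)] =
    \bigcap_(i in [set: 'I_n]) ((fun x : n.-tuple T => tnth x i) @^-1` P i).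
  by apply/seteqP; split => [x Px i _|x Px i]; exact: Px.
apply: fin_bigcap_measurable; first exact: finite_finset.
move=> i _; rewrite -[X in measurable X]setTI; exact: measurable_tnth.
Qed.

Lemma measurable_tuple1 {d} {T : measurableType d} {n} (c : n.-tuple T) :
  (forall y : T, measurable [set y]) -> measurable [set c].
Proof.
move=> m1; have -> : [set c] = [set x : n.-tuple T | forall i, [set tnth c i] (tnth x i)].
  apply/seteqP; split => [x -> //|x cx]; exact/eq_from_tnth.
exact: (measurable_coordinatewise _ (fun i => m1 (tnth c i))).
Qed.

Lemma increasing_seq_ge_id {f : nat -> nat} : increasing_seq f -> forall k, (k <= f k)%N.
Proof.
move=> /increasing_seqP incf; elim => [//|k IHk]; exact: leq_ltn_trans IHk (incf k).
Qed.

Lemma cvgn_subseq {U : topologicalType} {u : nat -> U} {l : U} {f : nat -> nat} :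
  increasing_seq f -> u @ \oo --> l -> (u \o f) @ \oo --> l.
Proof.
move=> incf; apply: cvg_comp => P [N _ NP]; exists N => // k /= Nk.
exact/NP/(leq_trans Nk)/increasing_seq_ge_id.
Qed.

Section measure_lemmas.
Context {d} {T : measurableType d} {R : realType} (mu : {measure set T -> \bar R}).
Local Open Scope ereal_scope.

Lemma nonincreasing_measure_lt (D : (set T)^nat) :
  mu (D 0%N) < +oo -> (forall k, measurable (D k)) -> nonincreasing_seq D ->
  \bigcap_k D k = set0 -> forall eps : R, (0 < eps)%R -> exists k, mu (D k) < eps%:E.
Proof.
move=> muD0 mD ndD D0 eps e0.
have : mu \o D @ \oo --> mu (\bigcap_k D k).
  by apply: nonincreasing_cvg_mu => //; exact: bigcapT_measurable.
rewrite D0 measure0 => /(_ _ (nbhs_open_ereal_lt (f := fun=> eps) e0)) [k _ Dk].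
by exists k; apply: Dk => /=.
Qed.

Lemma measure_bigcup_stage_lt {F : (set T)^nat} :
  (forall k, measurable (F k)) -> mu (\bigcup_k F k) < +oo ->
  forall eps : R, (0 < eps)%R ->
  exists N, mu (\bigcup_k F k `\` \big[setU/set0]_(k < N) F k) < eps%:E.
Proof.
move=> mF muF; pose G N := \bigcup_k F k `\` \bigcup_(k in `I_N) F k.
have mFT : measurable (\bigcup_k F k) by exact: bigcupT_measurable.
have mG N : measurable (G N).
  by apply: measurableD => //; rewrite bigcup_mkord; exact: bigsetU_measurable.
move=> eps e0; have [N muG] : exists N, mu (G N) < eps%:E.
  apply: nonincreasing_measure_lt => //.
  - by apply: le_lt_trans muF; apply: le_measure; rewrite ?inE // => x [].
  - apply/nonincreasing_seqP => N; apply/subsetPset => x [Fx nGx].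
    by split => // -[k /= kN Fkx]; apply: nGx; exists k => //=; exact: ltnW.
  - apply/seteqP; split => // x Gx; have [[k _ Fkx] _] := Gx 0%N I.
    by have [_] := Gx k.+1 I; apply; exists k => /=.
by exists N; rewrite -bigcup_mkord.
Qed.

Lemma measure_bigcup_gt0 {I : countType} (A : I -> set T) :
  (forall i, measurable (A i)) -> 0 < mu (\bigcup_i A i) -> exists i, 0 < mu (A i).
Proof.
move=> mA; apply: contraPP => /forallNP A0.
have {}A0 i : mu (A i) = 0.
  by apply/eqP; rewrite -measure_le0 leNgt; apply/negP => /A0.
have : mu.-negligible (\bigcup_i A i).
  apply: (@negligibleS _ _ _ _ (\bigcup_k if unpickle k is Some i then A i else set0)).
    by move=> x [i _ Aix]; exists (pickle i) => //; rewrite pickleK.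
  apply: negligible_bigcup => k; case: unpickle => [i|]; last exact: negligible_set0.
  by apply/negligibleP => //; exact: A0.
by move=> /negligibleP -> //; [rewrite ltxx|exact: countable_bigcupT_measurable].
Qed.

Lemma measure_bigcupD_le {U F : (set T)^nat} :
  (forall k, measurable (U k)) -> (forall k, measurable (F k)) ->
  mu (\bigcup_k U k `\` \bigcup_k F k) <= \sum_(0 <= k <oo) mu (U k `\` F k).
Proof.
move=> mU mF; apply: measure_sigma_subadditive.
- by move=> k; exact: measurableD.
- by apply: measurableD; exact: bigcupT_measurable.
by move=> x [[k _ Ukx] nFx]; exists k => //; split => // Fkx; apply: nFx; exists k.
Qed.

Lemma integral_gt0 (D : set T) (f : T -> \bar R) : measurable D ->
  measurable_fun D f -> 0 < mu D -> (forall x, D x -> 0 < f x) ->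
  0 < \int[mu]_(x in D) f x.
Proof.
move=> mD mf muD f_gt0; rewrite lt0e integral_ge0 ?andbT; last first.
  by move=> x /f_gt0/ltW.
apply/negP => /eqP int0.
have [N [mN N0 fN]] : ae_eq mu D f (cst 0).
  apply/(ae_eq_integral_abs mu mD mf).1; rewrite -[RHS]int0.
  by apply: eq_integral => x /[!inE] /f_gt0/ltW/gee0_abs.
have : mu D <= mu N.
  apply: le_measure; rewrite ?inE // => x Dx; apply: fN => /(_ Dx) fx0.
  by have := f_gt0 x Dx; rewrite fx0 ltxx.
by rewrite N0 leNgt muD.
Qed.

End measure_lemmas.

Section sup_norm_topology.
Context {R : realType} {n : nat}.
Local Notation T := (n.-tuple R).
Implicit Types (F G : set T) (x y z c : T).

Definition cube c (r : R) : set T :=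
  [set x | forall i, `|tnth x i - tnth c i| < r].

Definition ccube (N : R) : set T := [set x | forall i, `|tnth x i| <= N].

(* [n.-tuple R] carries no topology, so closedness for the sup norm is
   stated directly with open cubes. *)
Definition tclosed F :=
  forall x, ~ F x -> exists2 r, 0 < r & forall y, cube x r y -> ~ F y.

Lemma subset_cube {c} {r s : R} : r <= s -> cube c r `<=` cube c s.
Proof. by move=> rs x xc i; exact: lt_le_trans (xc i) rs. Qed.

Lemma measurable_cube c r : measurable (cube c r).
Proof.
have -> : cube c r =
    [set x | forall i, `]tnth c i - r, tnth c i + r[%classic (tnth x i)].
  by apply/seteqP; split => x cx i; have := cx i; rewrite /= in_itv /= ltr_distl.
exact: (measurable_coordinatewise _ (fun i => measurable_itv _)).
Qed.

Lemma rat_cube_cover x {r : R} : 0 < r ->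
  exists c : n.-tuple rat, cube (map_tuple ratr c) r x.
Proof.
move=> r0.
have /choice[c xc] : forall i, exists q : rat, `|tnth x i - ratr q| < r.
  move=> i; have : tnth x i - r < tnth x i + r by rewrite ltrD2l gtrN.
  by move=> /rat_in_itvoo[q]; rewrite in_itv /= -ltr_distlC; exists q.
by exists [tuple c i | i < n] => i; rewrite tnth_map tnth_mktuple.
Qed.

(* A closed set is the intersection over k of the union of the rational
   cubes of radius 1/(k+1) that meet it. *)
Lemma tclosed_measurable F : tclosed F -> measurable F.
Proof.
move=> cF; pose rad k : R := k.+1%:R^-1.
have rad_gt0 k : 0 < rad k by rewrite invr_gt0 ltr0Sn.
pose C k (c : n.-tuple rat) : set T :=
  if pselect (cube (map_tuple ratr c) (rad k) `&` F !=set0)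
  then cube (map_tuple ratr c) (rad k) else set0.
have -> : F = \bigcap_k \bigcup_c C k c.
  apply/seteqP; split => [x Fx k _|x Cx].
    have [c xc] := rat_cube_cover x (rad_gt0 k).
    by exists c => //; rewrite /C; case: pselect => // -[]; exists x.
  apply: contrapT => /cF[r r0 rF].
  have [k kr] : exists k, rad k < r / 2.
    by have [k] := ltr_add_invr (divr_gt0 r0 (ltr0Sn R 1)); rewrite add0r; exists k.
  have [c _] := Cx k I; rewrite /C; case: pselect => // -[y [cy Fy]] cx.
  apply: (rF y) => // i; rewrite -(subrKA (tnth (map_tuple ratr c) i)).
  apply: le_lt_trans (ler_normD _ _) _; rewrite (splitr r); apply: ltrD.
    exact: lt_trans (cy i) kr.
  by rewrite distrC; exact: lt_trans (cx i) kr.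
apply: bigcapT_measurable => k; apply: countable_bigcupT_measurable => // c.
by rewrite /C; case: ifP => _ //; exact: measurable_cube.
Qed.

Lemma tclosed0 : tclosed (set0 : set T).
Proof. by move=> x _; exists 1 => // y _ []. Qed.

Lemma tclosedT : tclosed [set: T].
Proof. by move=> x /(_ I). Qed.

Lemma tclosedU {F G} : tclosed F -> tclosed G -> tclosed (F `|` G).
Proof.
move=> cF cG x /not_orP[/cF[r r0 rF] /cG[s s0 sG]].
exists (Num.min r s) => [|y xy]; first by rewrite lt_min r0 s0.
case; [apply: rF|apply: sG]; apply: subset_cube xy; by rewrite ge_min lexx ?orbT.
Qed.

Lemma tclosed_bigcap {I : Type} {D : set I} {F : I -> set T} :
  (forall i, tclosed (F i)) -> tclosed (\bigcap_(i in D) F i).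
Proof.
move=> cF x /existsNP[i /not_implyP[Di /cF[r r0 rF]]].
by exists r => // y xy Fy; exact: rF xy (Fy i Di).
Qed.

Lemma tclosedI {F G} : tclosed F -> tclosed G -> tclosed (F `&` G).
Proof.
move=> cF cG x /not_andP[/cF[r r0 rF]|/cG[r r0 rG]].
  by exists r => // y xy [Fy _]; exact: rF xy Fy.
by exists r => // y xy [_ Gy]; exact: rG xy Gy.
Qed.

Lemma tclosed_bigsetU {F : nat -> set T} {N} :
  (forall k, tclosed (F k)) -> tclosed (\big[setU/set0]_(k < N) F k).
Proof.
move=> cF; elim: N => [|N IHN]; first by rewrite big_ord0; exact: tclosed0.
by rewrite big_ord_recr /=; exact: tclosedU.
Qed.

Lemma tclosed_le (i : 'I_n) (a : R) : tclosed [set x : T | tnth x i <= a].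
Proof.
move=> x /negP; rewrite -ltNge => ax; exists (tnth x i - a); first by rewrite subr_gt0.
move=> y /(_ i); rewrite ltr_distl => /andP[+ _] /=.
by rewrite opprB addrCA subrr addr0 => /lt_le_trans/[apply]; rewrite ltxx.
Qed.

Lemma tclosed_ge (i : 'I_n) (a : R) : tclosed [set x : T | a <= tnth x i].
Proof.
move=> x /negP; rewrite -ltNge => ax; exists (a - tnth x i); first by rewrite subr_gt0.
move=> y /(_ i); rewrite ltr_distl => /andP[_] /=.
by rewrite addrCA subrr addr0 => /le_lt_trans/[apply]; rewrite ltxx.
Qed.

Lemma tclosed_ccube (N : R) : tclosed (ccube N : set T).
Proof.
have -> : ccube N = \bigcap_(i in [set: 'I_n])
    ([set x : T | tnth x i <= N] `&` [set x | - N <= tnth x i]).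
  apply/seteqP; split => [x xN i _|x xN i]; rewrite ?ler_norml.
    by have := xN i; rewrite ler_norml => /andP[].
  by apply/andP; case: (xN i I).
by apply: tclosed_bigcap => i; apply: tclosedI; [exact: tclosed_le|exact: tclosed_ge].
Qed.

Definition coord_cvg (u : nat -> T) z :=
  forall i, (fun k => tnth (u k) i) @ \oo --> tnth z i.

Lemma tclosed_coord_cvg {F} {u : nat -> T} {z} :
  tclosed F -> (forall k, F (u k)) -> coord_cvg u z -> F z.
Proof.
move=> cF Fu uz; apply: contrapT => /cF[r r0 rF].
have [N _ /(_ N (leqnn N)) zuN] :
    \forall k \near \oo, forall i, `|tnth z i - tnth (u k) i| < r.
  by apply: filter_forall => i; exact: cvgr_dist_lt (uz i) _ r0.
by apply: (rF (u N)) (Fu N) => i; rewrite distrC; exact: zuN.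
Qed.

Lemma tuple_bolzano_weierstrass {u : nat -> T} {N} : (forall k, ccube N (u k)) ->
  exists2 f : nat -> nat, increasing_seq f & exists z, coord_cvg (u \o f) z.
Proof.
move=> uN.
suff [f incf fcvg] : exists2 f : nat -> nat, increasing_seq f &
    forall i : 'I_n, cvgn (fun k => tnth (u (f k)) i).
  by exists f => //; exists [tuple limn (fun k => tnth (u (f k)) i) | i < n] => i;
    rewrite tnth_mktuple; exact: fcvg.
suff /(_ n) [f incf fcvg] : forall m, exists2 f : nat -> nat, increasing_seq f &
    forall i : 'I_n, (i < m)%N -> cvgn (fun k => tnth (u (f k)) i).
  by exists f => // i; exact: fcvg.
elim => [|m [f incf fcvg]]; first by exists id.
have [mn|nm] := ltnP m n; last first.
  by exists f => // i _; apply: fcvg; exact: leq_trans (ltn_ord i) nm.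
have [|g incg gcvg] := @bolzano_weierstrass R (fun k => tnth (u (f k)) (Ordinal mn)).
  exists N; split; first exact: num_real.
  by move=> x Nx k _; exact: le_trans (uN _ _) (ltW Nx).
exists (f \o g) => [a b|i]; first exact: etrans (incf _ _) (incg a b).
rewrite ltnS leq_eqVlt => /orP[/eqP im|im].
  by have -> : i = Ordinal mn by exact: val_inj.
exact: cvgP (cvgn_subseq incg (fcvg i im)).
Qed.

Lemma tnth_sel (v : n.-tuple bool) x i :
  tnth (sel v x) i = if tnth v i then tnth x i else 0.
Proof. by rewrite /sel tnth_mktuple. Qed.

(* [F `&` ccube N] is sequentially compact, hence so is its image under the
   continuous map [sel v]. *)
Lemma tclosed_sel_image (v : n.-tuple bool) F (N : R) :
  tclosed F -> tclosed (sel v @` (F `&` ccube N)).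
Proof.
move=> cF a na; apply: contrapT => a_lim; pose rad k : R := k.+1%:R^-1.
have /choice[u uP] : forall k, exists x, (F `&` ccube N) x /\ cube a (rad k) (sel v x).
  move=> k; apply: contrapT => nk; apply: a_lim; exists (rad k).
    by rewrite invr_gt0 ltr0Sn.
  by move=> y ay [x Kx xy]; apply: nk; exists x; rewrite xy.
have [f incf [z uz]] := tuple_bolzano_weierstrass (fun k => (uP k).1.2).
have Kz : (F `&` ccube N) z.
  exact: tclosed_coord_cvg (tclosedI cF (tclosed_ccube N)) (fun k => (uP (f k)).1) uz.
apply: na; exists z => //; apply: eq_from_tnth => i.
have to_sel : (fun k => tnth (sel v (u (f k))) i) @ \oo --> tnth (sel v z) i.
  rewrite tnth_sel; under eq_fun do rewrite tnth_sel.
  by case: (tnth v i); [exact: uz|exact: cvg_cst].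
have to_a : (fun k => tnth (sel v (u (f k))) i) @ \oo --> tnth a i.
  apply/cvgrPdist_lt => e e0; have [K] := ltr_add_invr e0; rewrite add0r => Ke.
  exists K => // k Kk; rewrite distrC; apply: lt_trans ((uP (f k)).2 i) _.
  apply: le_lt_trans Ke; rewrite lef_pV2 ?posrE ?ltr0Sn // ler_nat ltnS.
  exact: leq_trans Kk (increasing_seq_ge_id incf k).
by rewrite -(norm_cvg_lim to_sel) (norm_cvg_lim to_a).
Qed.

End sup_norm_topology.

Section closed_regularity.
Context {R : realType} {n : nat} (mu : {finite_measure set (n.-tuple R) -> \bar R}).
Local Notation T := (n.-tuple R).
Implicit Types (F G U : set T).

Definition closed_approx G := measurable G /\
  forall eps : R, 0 < eps -> exists F U,
    [/\ tclosed F, tclosed (~` U), F `<=` G, G `<=` U & (mu (U `\` F) < eps%:E)%E].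

Let mu_lty G : measurable G -> (mu G < +oo)%E.
Proof. by move=> mG; rewrite -ge0_fin_numE ?measure_ge0 ?fin_num_measure. Qed.

Lemma closed_approx0 : closed_approx set0.
Proof.
split => // eps e0; exists set0, set0; split => //.
- exact: tclosed0.
- by rewrite setC0; exact: tclosedT.
- by rewrite setD0 measure0 lte_fin.
Qed.

Lemma closed_approxC G : closed_approx G -> closed_approx (~` G).
Proof.
move=> [mG Gapprox]; split; first exact: measurableC.
move=> eps /Gapprox[F [U [cF cU FG GU muUF]]].
exists (~` U), (~` F); split; [exact: cU|by rewrite setCK|exact: subsetC|exact: subsetC|].
by rewrite setDE setCK setIC -setDE.
Qed.

Lemma closed_approx_bigcup (A : nat -> set T) :
  (forall k, closed_approx (A k)) -> closed_approx (\bigcup_k A k).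
Proof.
move=> Aapprox; split; first by apply: bigcupT_measurable => k; case: (Aapprox k).
move=> eps e0; have e20 : 0 < eps / 2 by rewrite divr_gt0.
have /choice[FU FUP] : forall k, exists FU : set T * set T,
    [/\ tclosed FU.1, tclosed (~` FU.2), FU.1 `<=` A k, A k `<=` FU.2 &
     (mu (FU.2 `\` FU.1) < (eps / 2 / (2 ^ k.+1)%:R)%:E)%E].
  move=> k; have [_ /(_ (eps / 2 / (2 ^ k.+1)%:R))] := Aapprox k.
  by case=> [|F [U FUk]]; [rewrite divr_gt0 // ltr0n expn_gt0|exists (F, U)].
pose F k := (FU k).1; pose U k := (FU k).2.
have cF k : tclosed (F k) by case: (FUP k).
have mF k : measurable (F k) by exact: tclosed_measurable.
have mU k : measurable (U k).
  by rewrite -[U k]setCK; apply: measurableC; apply: tclosed_measurable; case: (FUP k).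
have [N muFG] := measure_bigcup_stage_lt mu mF
  (mu_lty _ (bigcupT_measurable _ mF)) _ e20.
pose G := \big[setU/set0]_(k < N) F k.
exists G, (\bigcup_k U k); split.
- exact: tclosed_bigsetU.
- by rewrite setC_bigcup; apply: tclosed_bigcap => k; case: (FUP k).
- rewrite /G -bigcup_mkord => x [k _ Fkx].
  by exists k => //; case: (FUP k) => _ _ + _ _; apply.
- by move=> x [k _ Akx]; exists k => //; case: (FUP k) => _ _ _ + _; apply.
have mUF : measurable (\bigcup_k U k `\` \bigcup_k F k).
  by apply: measurableD; exact: bigcupT_measurable.
have mFG : measurable (\bigcup_k F k `\` G).
  by apply: measurableD; [exact: bigcupT_measurable|exact: bigsetU_measurable].
apply: (@le_lt_trans _ _
  (mu ((\bigcup_k U k `\` \bigcup_k F k) `|` (\bigcup_k F k `\` G)))).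
  apply: le_measure; rewrite ?inE; [|exact: measurableU|].
  - by apply: measurableD; [exact: bigcupT_measurable|exact: bigsetU_measurable].
  - by move=> x [Ux nGx]; have [Fx|nFx] := pselect ((\bigcup_k F k) x); [right|left].
apply: le_lt_trans (measureU2 _ mUF mFG) _.
rewrite [eps]splitr EFinD lee_ltD ?fin_num_measure //.
apply: le_trans (measure_bigcupD_le mu mU mF) _.
apply: le_trans _ (epsilon_trick0 xpredT (ltW e20)).
apply: lee_nneseries => [k _ _|k _]; first exact: measure_ge0.
by apply: ltW; case: (FUP k).
Qed.

Lemma closed_approx_coord_lt (i : 'I_n) (a : R) :
  closed_approx ((fun x : T => tnth x i) @^-1` `]-oo, a[).
Proof.
set G := _ @^-1` _.
have GE : G = [set x | tnth x i < a] by apply/seteqP; split => x; rewrite /G /= in_itv.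
have mG : measurable G.
  by rewrite -[G]setTI; exact: measurable_tnth _ _ (measurable_itv _).
split => // eps e0; pose F k := [set x : T | tnth x i <= a - k.+1%:R^-1].
have mF k : measurable (F k) by apply: tclosed_measurable; exact: tclosed_le.
have [k muGF] : exists k, (mu (G `\` F k) < eps%:E)%E.
  apply: (nonincreasing_measure_lt mu) => //.
  - by apply/mu_lty/measurableD.
  - by move=> k; exact: measurableD.
  - apply/nonincreasing_seqP => k; apply/subsetPset => x [Gx nFx]; split => // Fx.
    by apply/nFx/(le_trans Fx); rewrite lerD2l lerN2 lef_pV2 ?posrE ?ltr0Sn ?ler_nat.
  - apply/seteqP; split => // x GFx; have [+ _] := GFx 0%N I; rewrite GE /= => xa.
    have [k] := ltr_add_invr xa; rewrite -ltrBrDr => /ltW xk.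
    by have [_] := GFx k I.
exists (F k), G; split => //; first exact: tclosed_le.
- have -> : ~` G = [set x | a <= tnth x i].
    by rewrite GE; apply/seteqP; split => x /=; rewrite leNgt => /negP.
  exact: tclosed_ge.
- move=> x; rewrite GE /F /= => /le_lt_trans; apply.
  by rewrite ltrBlDr ltrDl invr_gt0 ltr0Sn.
Qed.

Lemma closed_approx_coord (i : 'I_n) (B : set R) : measurable B ->
  closed_approx ((fun x : T => tnth x i) @^-1` B).
Proof.
pose D := [set B : set R | closed_approx ((fun x : T => tnth x i) @^-1` B)].
have sigmaD : sigma_algebra setT D.
  split; first by rewrite /D /= preimage_set0; exact: closed_approx0.
  - by move=> A DA; rewrite /D /= setTD preimage_setC; exact: closed_approxC.
  - by move=> A DA; rewrite /D /= preimage_bigcup; exact: closed_approx_bigcup.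
move=> mB; suff : D B by [].
have : (@RGenInftyO.G R).-sigma.-measurable B by rewrite -RGenInftyO.measurableE.
by apply: smallest_sub => // _ [a ->]; exact: closed_approx_coord_lt.
Qed.

Lemma measurable_closed_approx {G} : measurable G -> closed_approx G.
Proof.
have sigma_approx : sigma_algebra setT closed_approx.
  split; [exact: closed_approx0| |exact: closed_approx_bigcup].
  by move=> A /closed_approxC; rewrite setTD.
move=> mG; apply: (smallest_sub sigma_approx _ mG).
apply: (big_ind (fun S => S `<=` closed_approx)) => //.
  by move=> S1 S2 S1a S2a S [/S1a|/S2a].
by move=> i _ _ [B mB <-]; rewrite setTI; exact: closed_approx_coord.
Qed.

Lemma inner_closed_bounded {G} : measurable G -> (0 < mu G)%E ->
  exists F (N : nat), [/\ tclosed F, F `<=` G & (0 < mu (F `&` ccube N%:R))%E].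
Proof.
move=> mG muG.
have [F [U [cF cU FG GU muUF]]] : exists F U, [/\ tclosed F, tclosed (~` U),
    F `<=` G, G `<=` U & (mu (U `\` F) < mu G)%E].
  have [_ /(_ (fine (mu G)))] := measurable_closed_approx mG.
  by rewrite -lte_fin fineK ?fin_num_measure //; exact.
have mF : measurable F by exact: tclosed_measurable.
have mU : measurable U by rewrite -[U]setCK; apply: measurableC; exact: tclosed_measurable.
have muF : (0 < mu F)%E.
  rewrite lt0e measure_ge0 andbT; apply/negP => /eqP F0.
  have : (mu G <= mu (U `\` F))%E.
    have mUF : measurable (U `\` F) by exact: measurableD.
    apply: (@le_trans _ _ (mu (F `|` (U `\` F)))).
      apply: le_measure; rewrite ?inE //; first exact: measurableU.
      by move=> x Gx; have [Fx|nFx] := pselect (F x); [left|right; split => //; exact: GU].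
    apply: le_trans (measureU2 mu mF mUF) _.
    by rewrite -[leRHS]add0e leeD2r // -F0; exact: lexx.
  by rewrite leNgt muUF.
have [N FN] : exists N : nat, (0 < mu (F `&` ccube N%:R))%E.
  apply: (measure_bigcup_gt0 mu) => [N|].
    by apply: measurableI => //; apply: tclosed_measurable; exact: tclosed_ccube.
  suff <- : F = \bigcup_(N : nat) (F `&` ccube N%:R) by [].
  apply/seteqP; split => [x Fx|x [N _ []] //].
  exists (\max_(i < n) (Num.truncn `|tnth x i|).+1)%N => //; split => // i.
  apply: ltW; apply: lt_le_trans (truncnS_gt _) _.
  by rewrite ler_nat (@leq_bigmax _ (fun i : 'I_n => (Num.truncn `|tnth x i|).+1)).
by exists F, N.
Qed.

End closed_regularity.

Section snd_measurable.
Context {d1 d2} {T1 : measurableType d1} {T2 : measurableType d2}.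
HB.instance Definition _ := isMeasurableFun.Build _ _ _ _ (@snd T1 T2) measurable_snd.
End snd_measurable.

Lemma prob_bool_indep_of_null_true {R : realType} {dY} {Y : measurableType dY}
    (P : {measure set (Y * bool)%type -> \bar R}) : P setT = 1%E ->
  P (setT `*` [set true]) = 0%E -> forall (A : set Y) (B : set bool),
  measurable A -> P (A `*` B) = (P (A `*` setT) * P (setT `*` B))%E.
Proof.
move=> PT P0 A B mA.
have Ptrue A' : measurable A' -> P (A' `*` [set true]) = 0%E.
  move=> mA'; apply/eqP; rewrite -measure_le0 -P0.
  apply: le_measure; rewrite ?inE; try exact: measurableX.
  by move=> [y b] [_ /= ->].
have Pfalse A' : measurable A' -> P (A' `*` [set false]) = P (A' `*` setT).
  move=> mA'; have -> : A' `*` setT = A' `*` [set false] `|` A' `*` [set true].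
    apply/seteqP; split => -[y b] /=; last by case=> -[].
    by case: b => -[Ay _]; [right|left].
  rewrite measureU; try exact: measurableX.
    by rewrite -[LHS]adde0; congr (_ + _)%E; exact/esym/Ptrue.
  by apply/seteqP; split => -[y b] // /= [[_ ->] [_]].
have P1 : P (setT `*` setT) = 1%E by rewrite setXTT.
have [Bt|Bnt] := pselect (B true); have [Bf|Bnf] := pselect (B false).
- have -> : B = setT by apply/seteqP; split => // -[].
  by rewrite P1 mule1.
- have -> : B = [set true] by apply/seteqP; split => -[] //= /Bnf.
  by rewrite !Ptrue // mule0.
- have -> : B = [set false] by apply/seteqP; split => -[] //= /Bnt.
  by rewrite !Pfalse // P1 mule1.
- have -> : B = set0 by apply/seteqP; split => // -[] => [/Bnt|/Bnf].
  by rewrite !setX0 measure0 mule0.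
Qed.

Lemma measurable_sel {R : realType} {n} (v : n.-tuple bool) :
  measurable_fun setT (@sel R n v).
Proof.
apply/measurable_fun_tnthP => i.
have -> : (fun x => tnth x i) \o @sel R n v =
    if tnth v i then (fun x => tnth x i) else cst 0.
  by apply/funext => x /=; rewrite tnth_sel; case: (tnth v i).
by case: (tnth v i); [exact: measurable_tnth|exact: measurable_cst].
Qed.

Section encoding.
Context {R : realType} {dY : measure_display} {Y : measurableType dY} {d : nat}.
Variables (q : probability (Y * d.-tuple R)%type R)
  (e : d.-tuple R -> d.-tuple bool)
  (kappa : d.-tuple bool -> R.-pker (d.-tuple R) ~> (Y * bool)%type).

Lemma measurable_sel_snd (v : d.-tuple bool) (A : set (d.-tuple R)) :
  measurable A -> measurable [set w : Y * d.-tuple R | A (sel v w.2)].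
Proof.
move=> mA; rewrite -[X in measurable X]setTI.
exact: (measurableT_comp (measurable_sel v) measurable_snd) measurableT A mA.
Qed.

Lemma encoding_of_selection (v : d.-tuple bool) (Sv : set (d.-tuple R)) :
  is_rcd q e kappa -> measurable Sv ->
  (0 < q [set w | Sv (sel v w.2)])%E ->
  (forall a, Sv a -> ~ cond_indep_at kappa v a) -> encoding q e kappa.
Proof.
move=> rcd mSv qSv nci; exists ([set v] `*` Sv); split.
- exact: measurableX (measurable_tuple1 _ _) mSv.
- have -> : [set w : Y * d.-tuple R | ([set v] `*` Sv) (e w.2, sel (e w.2) w.2)] =
      [set w | Sv (sel v w.2) /\ (setT `*` [set true]) (w.1, Eind e v w.2)].
    apply/seteqP; split => w /=; first by case=> ev Sw; rewrite -ev /Eind eqxx.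
    by case=> Sw [_ /eqP ev]; rewrite ev.
  rewrite rcd //; last exact: measurableX.
  apply: integral_gt0 => //; first exact: measurable_sel_snd.
    apply: measurable_funS (measurableT) _ _ => //.
    apply: measurableT_comp (measurable_kernel (kappa v) _ (measurableX _ _)) _ => //.
    exact: measurableT_comp (measurable_sel v) measurable_snd.
  move=> w Sw; rewrite lt0e measure_ge0 andbT; apply/eqP => kappa0.
  apply: (nci _ Sw) => A B mA _.
  by apply: prob_bool_indep_of_null_true => //; rewrite prob_kernel.
- by move=> _ a [/= -> Sa]; exact: nci.
Qed.

Lemma selection_of_encoding : measurable_fun setT e -> encoding q e kappa ->
  exists v : d.-tuple bool,
    (0 < q [set w | e w.2 = v])%E /\
    exists Sv : set (d.-tuple R),
      [/\ measurable Sv,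
          Sv `<=` sel v @` [set x | e x = v],
          (0 < q [set w | Sv (sel v w.2)])%E &
          forall a, Sv a -> ~ cond_indep_at kappa v a].
Proof.
move=> me [S [mS qS nci]].
pose G v := [set x | e x = v /\ S (v, sel v x)].
have mG v : measurable (G v).
  apply: measurableI; rewrite -[X in measurable X]setTI.
    exact: me measurableT [set v] (measurable_tuple1 v _).
  exact: (measurable_fun_pair (measurable_cst v) (measurable_sel v)) measurableT S mS.
have [v qGv] : exists v, (0 < q ((@snd Y _) @^-1` G v))%E.
  apply: (measure_bigcup_gt0 q (fun v => snd @^-1` G v)) => [v|].
    by rewrite -[X in measurable X]setTI; exact: measurable_snd.
  have -> : \bigcup_v (@snd Y _) @^-1` G v = [set w | S (e w.2, sel (e w.2) w.2)] => //.
  by apply/seteqP; split => [w [v _ [/= <- Sw]] //|w Sw]; exists (e w.2).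
have [F [N [cF FG qF]]] := inner_closed_bounded (distribution q snd) (mG v) qGv.
exists v; split.
  apply: lt_le_trans qGv _; apply: le_measure; rewrite ?inE.
  - by rewrite -[X in measurable X]setTI; exact: measurable_snd.
  - rewrite -[X in measurable X]setTI.
    exact: (measurableT_comp me measurable_snd) measurableT _ (measurable_tuple1 v _).
  - by move=> w [].
exists (sel v @` (F `&` ccube N%:R)); split.
- by apply: tclosed_measurable; exact: tclosed_sel_image.
- by move=> _ [x [Fx _] <-]; exists x => //; case: (FG x Fx).
- have qK : (0 < q ((@snd Y _) @^-1` (F `&` ccube N%:R)))%E := qF.
  apply: lt_le_trans qK _; apply: le_measure; rewrite ?inE.
  + rewrite -[X in measurable X]setTI; apply: measurable_snd => //.
    by apply: measurableI; apply: tclosed_measurable => //; exact: tclosed_ccube.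
  + by apply: measurable_sel_snd; apply: tclosed_measurable; exact: tclosed_sel_image.
  + by move=> w Kw; exists w.2.
- by move=> _ [x [Fx _] <-]; have [_] := FG x Fx; exact: nci.
Qed.

End encoding.

Theorem lemma2 (R : realType) (dY : measure_display) (Y : measurableType dY)
  (d : nat) (q : probability (Y * d.-tuple R)%type R)
  (e : d.-tuple R -> d.-tuple bool)
  (kappa : d.-tuple bool -> R.-pker (d.-tuple R) ~> (Y * bool)%type) :
  measurable_fun setT e ->
  is_rcd q e kappa ->
  (encoding q e kappa <->
   exists v : d.-tuple bool,
     (0 < q [set w | e w.2 = v])%E /\
     exists Sv : set (d.-tuple R),
       [/\ measurable Sv,
           Sv `<=` sel v @` [set x | e x = v],
           (0 < q [set w | Sv (sel v w.2)])%E &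
           forall a, Sv a -> ~ cond_indep_at kappa v a]).
Proof.
move=> me rcd; split; first exact: selection_of_encoding.
by case=> v [_ [Sv [mSv _ qSv nci]]]; exact: encoding_of_selection rcd mSv qSv nci.
Qed.
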